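(* Let $T=(V,\Pi)$ be a path system with $n$ nodes, $p$ paths, bridge girth $>3$, maximum path length $L$, and average path length at least a sufficiently large absolute constant. Then $$\|T\|_2^2:=\sum_{\pi\in\Pi}|\pi|^2=O\left(nL+p^{1/3}n^{4/3}\right).$$
   Context: A path system is a pair $T=(V,\Pi)$ where $V$ is a finite ground set of nodes and $\Pi$ is a multiset of finite sequences of nodes (paths), each containing each node at most once; $|\pi|$ is the number of nodes of $\pi$ (its length), and the average path length is $\sum_{\pi}|\pi|/p$. Write $x<_\pi y$ if $x,y\in\pi$ and $x$ strictly precedes $y$ in $\pi$. A $b$-bridge consists of $b$ distinct nodes $v_1,\dots,v_b$ and $b$ distinct paths $\pi_1,\dots,\pi_b$ with $v_i<_{\pi_i}v_{i+1}$ for $1\le i\le b-1$ and $v_1<_{\pi_b}v_b$. The bridge girth is the least $b$ for which there is a $b$-bridge ($\infty$ if none). *)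

From Stdlib Require Import Reals.
From mathcomp Require Import all_boot.
Set Implicit Arguments. Unset Strict Implicit. Unset Printing Implicit Defensive.

(* A path system over a finite node type V: a multiset of paths, represented
   as a list of sequences of nodes (repetitions allowed = multiset). *)
Definition path_system (V : finType) (P : seq (seq V)) : Prop := all uniq P.

Definition precedes (V : eqType) (pi : seq V) (x y : V) : bool :=
  [&& x \in pi, y \in pi & index x pi < index y pi].

(* A b-bridge (0-indexed): distinct nodes v 0, ..., v (b-1) and distinct paths
   (distinct positions k 0, ..., k (b-1) in the multiset P) such that
   v i <_{P(k i)} v (i+1) for i < b-1, and v 0 <_{P(k (b-1))} v (b-1). *)
Definition bridge (V : finType) (P : seq (seq V)) (b : nat) : Prop :=
  exists (v : nat -> V) (k : nat -> nat),
    (forall i j, i < b -> j < b -> v i = v j -> i = j) /\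
    (forall i j, i < b -> j < b -> k i = k j -> i = j) /\
    (forall i, i < b -> k i < size P) /\
    (forall i, i.+1 < b -> precedes (nth [::] P (k i)) (v i) (v i.+1)) /\
    precedes (nth [::] P (k b.-1)) (v 0) (v b.-1).

Definition bridge_girth_gt3 (V : finType) (P : seq (seq V)) : Prop :=
  forall b, b <= 3 -> ~ bridge P b.

Definition total_length (V : Type) (P : seq (seq V)) : nat :=
  \sum_(pi <- P) size pi.

Definition max_length (V : Type) (P : seq (seq V)) : nat :=
  \max_(pi <- P) size pi.

Definition sq_norm (V : Type) (P : seq (seq V)) : nat :=
  \sum_(pi <- P) (size pi) ^ 2.

(* Give a node y on a path of length l the depth min(#nodes before y, #nodes
   after y); the depths along one path add up to about l^2/4, so
   Q = ||T||_2^2 is at most 4F + 2S, where F is the total depth and S the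
   total length.  Fix a path k through y and call another path k' through y
   avoiding if it contains no node that follows y on k.  Bridge girth > 3
   leaves at most one non-avoiding k', and for avoiding k' it makes (y, k')
   unique given k, a node x before y on k and a node z after y on k'.  An
   avoiding pair (k, k') at y yields depth_k(y) * depth_k'(y) such triples
   (k, x, z), so sum_y M(y)^2 <= nS + 2LF, with M(y) the total depth of y,
   and Cauchy-Schwarz gives F^2 <= n(nS + 2LF).  With S^2 <= pQ and S >= 4p
   this forces Q = O(nL) or Q^3 = O(n^4 p). *)

From Stdlib Require Import Reals Lra.
From mathcomp Require Import all_boot zify.
Set Implicit Arguments. Unset Strict Implicit. Unset Printing Implicit Defensive.

Lemma sum_unique_le (I : finType) (F : pred I) (G : I -> nat) c :
  (forall i j, F i -> F j -> i = j) -> (forall i, F i -> G i <= c) ->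
  \sum_(i | F i) G i <= c.
Proof.
move=> F_unique G_le; case: (pickP F) => [i Fi|F0]; last by rewrite big_pred0.
rewrite (bigD1 i) //= big1 ?addn0 ?G_le // => j /andP[Fj /eqP]; case.
exact: F_unique.
Qed.

Lemma sqr_sum_le (I : finType) (F : I -> nat) :
  (\sum_i F i) ^ 2 <= #|I| * \sum_i F i ^ 2.
Proof.
have sqr_sum : (\sum_i F i) ^ 2 = \sum_i \sum_j F i * F j.
  by rewrite expnS expn1 big_distrl; apply: eq_bigr => i _; rewrite big_distrr.
have sum_sqr2 : 2 * (#|I| * \sum_i F i ^ 2) = \sum_i \sum_j (F i ^ 2 + F j ^ 2).
  symmetry; rewrite (eq_bigr (fun i => #|I| * F i ^ 2 + \sum_j F j ^ 2)) => [|i _].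
    by rewrite big_split /= -big_distrr sum_nat_const mul2n addnn.
  by rewrite big_split /= sum_nat_const mulnC.
rewrite -(leq_pmul2l (isT : 0 < 2)) sqr_sum sum_sqr2 big_distrr.
apply: leq_sum => i _; rewrite big_distrr; apply: leq_sum => j _.
exact: nat_Cauchy.
Qed.

Lemma sum_ord_ltn n i : \sum_(j < n) (j < i : nat) = minn n i.
Proof.
elim: n => [|n IHn]; first by rewrite big_ord0 min0n.
by rewrite big_ord_recr /= IHn; case: ltnP => /=; lia.
Qed.

Lemma sum_ord_gtn n i : \sum_(j < n) (i < j : nat) = n - i.+1.
Proof.
elim: n => [|n IHn]; first by rewrite big_ord0.
by rewrite big_ord_recr /= IHn; case: ltnP => /=; lia.
Qed.

Definition total_depth l := \sum_(j < l) minn j (l - j.+1).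

Lemma total_depthSS l : total_depth l.+2 = total_depth l + l.
Proof.
rewrite /total_depth big_ord_recl big_ord_recr /= min0n subnn minn0 addn0.
rewrite (eq_bigr (fun j : 'I_l => minn j (l - j.+1) + 1)) => [|j _]; last first.
  by have := ltn_ord j; rewrite /bump /=; lia.
by rewrite big_split /= sum_nat_const card_ord muln1.
Qed.

Lemma sqr_le_total_depth l : l ^ 2 <= 4 * total_depth l + 2 * l.
Proof.
elim/ltn_ind: l => -[|[|l]] IHl; [lia | lia | rewrite total_depthSS].
by have := IHl l (leqW (ltnSn l)); lia.
Qed.

Lemma norm_dichotomy_arith n L p S Q F : 0 < p -> 4 * p <= S -> S ^ 2 <= p * Q ->
  Q <= 4 * F + 2 * S -> F ^ 2 <= n * (n * S + 2 * L * F) ->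
  Q <= 32 * (n * L) \/ Q ^ 3 <= 128 ^ 2 * (n ^ 4 * p).
Proof.
move=> p_gt0 S_ge S2_le Q_le F2_le.
have Q_ge : 4 * S <= Q.
  rewrite -(leq_pmul2l p_gt0); apply: leq_trans S2_le.
  by rewrite mulnCA mulnA expnS expn1 leq_mul2r S_ge orbT.
have {}Q_le : Q <= 8 * F by lia.
have [F_le|F_gt] := leqP F (4 * (n * L)); [left; lia | right].
have {}F2_le : F ^ 2 <= 2 * (n ^ 2 * S).
  have : 4 * (n * L) * F <= F * F by rewrite leq_mul2r ltnW ?orbT.
  by move: F2_le; rewrite !expnS !expn0 !muln1; nia.
have Q2_le : Q ^ 2 <= 128 * (n ^ 2 * S).
  apply: leq_trans (_ : 64 * F ^ 2 <= _); last by lia.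
  by rewrite -[64]/(8 ^ 2) -expnMn leq_exp2r.
have Q4_le : Q ^ 4 <= 128 ^ 2 * (n ^ 4 * S ^ 2).
  have -> : 128 ^ 2 * (n ^ 4 * S ^ 2) = (128 * (n ^ 2 * S)) ^ 2.
    by rewrite !expnMn -expnD.
  by rewrite -[4]/(2 * 2) expnM leq_exp2r.
have [Q0|Q_gt0] := posnP Q; first by rewrite Q0 exp0n ?leq0n.
rewrite -(leq_pmul2l Q_gt0) -expnS (leq_trans Q4_le) //.
by rewrite [Q * _]mulnCA leq_mul2l [Q * _]mulnCA leq_mul2l [Q * p]mulnC S2_le !orbT.
Qed.

Section Depth.

Variable V : finType.
Implicit Types (s : seq V) (x y z : V).

Definition depth s y := if y \in s then minn (index y s) (size s - (index y s).+1) else 0.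

Lemma depth_le_size s y : depth s y <= size s.
Proof.
rewrite /depth; case: ifP => // ys.
by rewrite geq_min ltnW ?index_mem.
Qed.

Variable s : seq V.
Hypothesis s_uniq : uniq s.

Lemma sum_index (G : nat -> nat) :
  \sum_x (if x \in s then G (index x s) else 0) = \sum_(j < size s) G j.
Proof.
rewrite -big_mkcond /= -big_uniq //; case: s s_uniq => [|a s'] uniq_s.
  by rewrite big_nil big_ord0.
rewrite (big_nth a) big_mkord; apply: eq_bigr => i _.
by rewrite index_uniq.
Qed.

Lemma sum_mem : \sum_x (x \in s : nat) = size s.
Proof. by rewrite (sum_index (fun _ => 1)) sum1_card card_ord. Qed.

Lemma sum_depth : \sum_y depth s y = total_depth (size s).
Proof. exact: (sum_index (fun j => minn j (size s - j.+1))). Qed.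

Lemma sum_precedes_l y : y \in s -> \sum_x (precedes s x y : nat) = index y s.
Proof.
move=> ys.
rewrite (eq_bigr (fun x => if x \in s then (index x s < index y s : nat) else 0)).
  rewrite (sum_index (fun j => (j < index y s : nat))) sum_ord_ltn.
  by apply/minn_idPr/ltnW; rewrite index_mem.
by move=> x _; rewrite /precedes ys; case: (x \in s).
Qed.

Lemma sum_precedes_r y : y \in s -> \sum_z (precedes s y z : nat) = size s - (index y s).+1.
Proof.
move=> ys.
rewrite (eq_bigr (fun z => if z \in s then (index y s < index z s : nat) else 0)).
  by rewrite (sum_index (fun j => (index y s < j : nat))) sum_ord_gtn.
by move=> z _; rewrite /precedes ys; case: (z \in s).
Qed.

End Depth.

Section Precedes.

Variables (V : eqType) (s : seq V).

Lemma precedes_meml u v : precedes s u v -> u \in s.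
Proof. by case/and3P. Qed.

Lemma precedes_memr u v : precedes s u v -> v \in s.
Proof. by case/and3P. Qed.

Lemma precedes_neq u v : precedes s u v -> u != v.
Proof. by case/and3P=> _ _; apply: contraTneq => ->; rewrite ltnn. Qed.

Lemma precedes_total u v : uniq s -> u \in s -> v \in s -> u != v ->
  precedes s u v || precedes s v u.
Proof.
move=> s_uniq us vs; rewrite /precedes us vs /=.
case: ltngtP => // eq_index; rewrite -(nth_index u us) eq_index nth_index //.
by rewrite eqxx.
Qed.

End Precedes.

Section PathSystem.

Variables (V : finType) (P : seq (seq V)).
Hypotheses (P_uniq : path_system P) (P_girth : bridge_girth_gt3 P).

Definition path_at (k : 'I_(size P)) : seq V := nth [::] P k.

Implicit Types (k : 'I_(size P)) (u v w x y z : V).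

Lemma uniq_path_at k : uniq (path_at k).
Proof. exact: (all_nthP [::] P_uniq). Qed.

Lemma size_path_at_le k : size (path_at k) <= max_length P.
Proof. by rewrite (leq_bigmax_seq (path_at k)) ?mem_nth. Qed.

Lemma depth_le_max_length k y : depth (path_at k) y <= max_length P.
Proof. exact: leq_trans (depth_le_size _ _) (size_path_at_le k). Qed.

Lemma total_length_path_at : total_length P = \sum_k size (path_at k).
Proof. by rewrite /total_length (big_nth [::]) big_mkord. Qed.

Lemma sq_norm_path_at : sq_norm P = \sum_k size (path_at k) ^ 2.
Proof. by rewrite /sq_norm (big_nth [::]) big_mkord. Qed.

Lemma no_2bridge k1 k2 u v :
  k1 != k2 -> precedes (path_at k1) u v -> precedes (path_at k2) u v -> False.
Proof.
move=> k12 uv1 uv2; apply: (P_girth (isT : 2 <= 3)).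
exists (fun i => if i == 0 then u else v), (fun i => if i == 0 then val k1 else val k2).
have uv := precedes_neq uv1; split; [|split; [|split; [|split]]] => //.
- by move=> [|[|i]] [|[|j]] //= _ _ eq_uv; rewrite eq_uv eqxx in uv.
- by move=> [|[|i]] [|[|j]] //= _ _ /val_inj eq_k; rewrite eq_k eqxx in k12.
- by move=> [|[|i]] //= _; apply: ltn_ord.
- by move=> [|i].
Qed.

Lemma no_3bridge k1 k2 k3 u v w :
  k1 != k2 -> k2 != k3 -> k1 != k3 ->
  precedes (path_at k1) u v -> precedes (path_at k2) v w -> precedes (path_at k3) u w ->
  False.
Proof.
move=> k12 k23 k13 uv vw uw; apply: (P_girth (leqnn 3)).
exists (fun i => if i == 0 then u else if i == 1 then v else w),
       (fun i => if i == 0 then val k1 else if i == 1 then val k2 else val k3).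
have nuv := precedes_neq uv; have nvw := precedes_neq vw; have nuw := precedes_neq uw.
split; [|split; [|split; [|split]]] => //.
- move=> [|[|[|i]]] [|[|[|j]]] //= _ _ eq_node;
  by move: nuv nvw nuw; rewrite eq_node !eqxx.
- move=> [|[|[|i]]] [|[|[|j]]] //= _ _ /val_inj eq_k;
  by move: k12 k23 k13; rewrite eq_k !eqxx.
- by move=> [|[|[|i]]] //= _; apply: ltn_ord.
- by move=> [|[|i]].
Qed.

Lemma precedes_reversed k k' y w : k' != k ->
  precedes (path_at k) y w -> y \in path_at k' -> w \in path_at k' ->
  precedes (path_at k') w y.
Proof.
move=> k'k yw yk' wk'; have wy : w != y by rewrite eq_sym (precedes_neq yw).
case/orP: (precedes_total (uniq_path_at k') wk' yk' wy) => // yw'.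
by case: (no_2bridge k'k yw' yw).
Qed.

Definition avoids_tail k' k y :=
  [forall w, (w \in path_at k') ==> ~~ precedes (path_at k) y w].

Lemma not_avoids_tail_unique k k1 k2 y :
  k1 != k -> k2 != k -> y \in path_at k1 -> y \in path_at k2 ->
  ~~ avoids_tail k1 k y -> ~~ avoids_tail k2 k y -> k1 = k2.
Proof.
move=> k1k k2k yk1 yk2 /forallPn[w1]; rewrite negb_imply negbK => /andP[w1k1 yw1].
move=> /forallPn[w2]; rewrite negb_imply negbK => /andP[w2k2 yw2].
apply/eqP/negP => /negP k12.
have w1y := precedes_reversed k1k yw1 yk1 w1k1.
have w2y := precedes_reversed k2k yw2 yk2 w2k2.
have [eq_w|w12] := eqVneq w1 w2.
  by rewrite eq_w in w1y; apply: no_2bridge k12 w1y w2y.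
case/orP: (precedes_total (uniq_path_at k) (precedes_memr yw1) (precedes_memr yw2) w12).
  by move=> w12k; apply: (no_3bridge _ _ _ w12k w2y w1y); rewrite eq_sym.
by move=> w21k; apply: (no_3bridge _ _ _ w21k w1y w2y); rewrite // eq_sym.
Qed.

Definition turn k x k' y z :=
  [&& k' != k, avoids_tail k' k y, precedes (path_at k) x y & precedes (path_at k') y z].

Lemma turn_unique k x z k1 y1 k2 y2 :
  turn k x k1 y1 z -> turn k x k2 y2 z -> (y1, k1) = (y2, k2).
Proof.
move=> /and4P[k1k avoid1 xy1 y1z] /and4P[k2k avoid2 xy2 y2z].
have [eq_y|y12] := eqVneq y1 y2.
  rewrite eq_y in y1z *; have [-> //|k12] := eqVneq k1 k2.
  by case: (no_2bridge k12 y1z y2z).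
have y_order := precedes_total (uniq_path_at k) (precedes_memr xy1) (precedes_memr xy2) y12.
have [eq_k|k12] := eqVneq k1 k2; last first.
  case/orP: y_order => [y12k|y21k].
    by case: (no_3bridge _ _ _ y12k y2z y1z); rewrite eq_sym.
  by case: (no_3bridge _ _ _ y21k y1z y2z); rewrite // eq_sym.
rewrite eq_k in avoid1 y1z; case/orP: y_order => [y12k|y21k].
  by move/forallP/(_ y2): avoid1; rewrite (precedes_meml y2z) y12k.
by move/forallP/(_ y1): avoid2; rewrite (precedes_meml y1z) y21k.
Qed.

Lemma sum_turns_le :
  \sum_k \sum_x \sum_z \sum_y \sum_k' (turn k x k' y z : nat) <=
  #|V| * \sum_k size (path_at k).
Proof.
rewrite big_distrr; apply: leq_sum => k _.
have turns_le x z : \sum_y \sum_k' (turn k x k' y z : nat) <= (x \in path_at k).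
  case xk: (x \in path_at k); last first.
    rewrite big1 // => y _; rewrite big1 // => k' _.
    by apply/eqP; rewrite eqb0; apply: contraFN xk => /and4P[_ _ /precedes_meml].
  rewrite pair_bigA -(big_mkcond (fun q : V * 'I_(size P) => turn k x q.2 q.1 z)) /=.
  by apply: sum_unique_le => // -[y1 k1] [y2 k2]; apply: turn_unique.
apply: (@leq_trans (\sum_x \sum_(z : V) (x \in path_at k : nat))).
  by apply: leq_sum => x _; apply: leq_sum => z _; apply: turns_le.
under eq_bigr do rewrite sum_nat_const.
by rewrite -big_distrr /= sum_mem ?uniq_path_at // mulnC.
Qed.

Lemma depth_mul_le_turns k k' y : k' != k -> avoids_tail k' k y ->
  depth (path_at k) y * depth (path_at k') y <= \sum_x \sum_z (turn k x k' y z : nat).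
Proof.
move=> k'k avoid; rewrite /turn k'k avoid /=.
have -> : \sum_x \sum_z (precedes (path_at k) x y && precedes (path_at k') y z : nat) =
    (\sum_x (precedes (path_at k) x y : nat)) * \sum_z (precedes (path_at k') y z : nat).
  rewrite big_distrl; apply: eq_bigr => x _.
  by rewrite big_distrr; apply: eq_bigr => z _; rewrite -mulnb.
rewrite /depth; case: ifP => yk; last by rewrite mul0n.
case: ifP => yk'; last by rewrite muln0.
rewrite sum_precedes_l ?sum_precedes_r ?uniq_path_at //.
by rewrite leq_mul ?geq_minl ?geq_minr.
Qed.

Definition node_depth y := \sum_k depth (path_at k) y.

Lemma node_depth_le k y :
  node_depth y <= depth (path_at k) y +
    \sum_(k' | (k' != k) && avoids_tail k' k y) depth (path_at k') y + max_length P.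
Proof.
rewrite /node_depth (bigD1 k) //= -addnA leq_add2l.
rewrite (bigID (fun k' => avoids_tail k' k y)) /= leq_add2l.
rewrite (bigID (fun k' => y \in path_at k')) /=.
rewrite [X in _ + X]big1 ?addn0 => [|k' /andP[_ /negbTE yk']]; last by rewrite /depth yk'.
apply: sum_unique_le => [k1 k2 /andP[/andP[k1k avoid1] yk1]|k' _]; last first.
  exact: depth_le_max_length.
case/andP=> /andP[k2k avoid2] yk2.
exact: (not_avoids_tail_unique k1k k2k yk1 yk2 avoid1 avoid2).
Qed.

Lemma sum_sqr_node_depth_le :
  \sum_y node_depth y ^ 2 <=
  #|V| * \sum_k size (path_at k) + 2 * max_length P * \sum_y node_depth y.
Proof.
set L := max_length P.
have sqr_le y : node_depth y ^ 2 <= \sum_k depth (path_at k) y *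
    (\sum_(k' | (k' != k) && avoids_tail k' k y) depth (path_at k') y + 2 * L).
  rewrite expnS expn1 {1}/node_depth big_distrl /=.
  apply: leq_sum => k _; rewrite leq_mul2l; apply/orP; right.
  apply: leq_trans (node_depth_le k y) _; rewrite addnAC addnC leq_add2l.
  by rewrite mul2n -addnn leq_add2r depth_le_max_length.
apply: leq_trans; first by apply: leq_sum => y _; apply: sqr_le.
under eq_bigr => y _ do under eq_bigr => k _ do rewrite mulnDr big_distrr /=.
under eq_bigr => y _ do rewrite big_split /=.
rewrite big_split /=; apply: leq_add.
  rewrite exchange_big /=; apply: leq_trans sum_turns_le; apply: leq_sum => k _.
  apply: (@leq_trans (\sum_y \sum_k' \sum_x \sum_z (turn k x k' y z : nat))).
    apply: leq_sum => y _.
    rewrite [X in _ <= X](bigID (fun k' => (k' != k) && avoids_tail k' k y)) /=.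
    apply: leq_trans (leq_addr _ _); apply: leq_sum => k' /andP[k'k avoid].
    exact: depth_mul_le_turns.
  under eq_bigr do rewrite exchange_big /=.
  under eq_bigr do under eq_bigr do rewrite exchange_big /=.
  rewrite exchange_big /=.
  by under eq_bigr do rewrite exchange_big /=.
apply: eq_leq; rewrite [RHS]mulnC [RHS]big_distrl; apply: eq_bigr => y _.
by rewrite /node_depth big_distrl.
Qed.

Lemma sum_node_depth : \sum_y node_depth y = \sum_k total_depth (size (path_at k)).
Proof. by rewrite exchange_big; apply: eq_bigr => k _; rewrite sum_depth ?uniq_path_at. Qed.

Lemma sq_norm_dichotomy : 0 < size P -> 4 * size P <= total_length P ->
  sq_norm P <= 32 * (#|V| * max_length P) \/
  sq_norm P ^ 3 <= 128 ^ 2 * (#|V| ^ 4 * size P).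
Proof.
move=> p_gt0 S_ge; apply: (norm_dichotomy_arith (F := \sum_y node_depth y) p_gt0 S_ge).
- rewrite total_length_path_at sq_norm_path_at.
  by have := sqr_sum_le (fun k => size (path_at k)); rewrite card_ord.
- rewrite sq_norm_path_at total_length_path_at sum_node_depth !big_distrr -big_split.
  by apply: leq_sum => k _; apply: sqr_le_total_depth.
- apply: leq_trans (sqr_sum_le _) _.
  by rewrite leq_mul2l total_length_path_at sum_sqr_node_depth_le orbT.
Qed.

End PathSystem.

Open Scope R_scope.

Lemma Rpower_gt0 x a : 0 < Rpower x a.
Proof. exact: exp_pos. Qed.

Lemma Rpower_pow3 x a : Rpower x a ^ 3 = Rpower x (a * 3).
Proof. by rewrite -Rpower_pow ?Rpower_mult ?INR_IZR_INZ //; apply: Rpower_gt0. Qed.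

Lemma cube_root_bound (q n p : nat) : (0 < p)%nat ->
  (q ^ 3 <= 128 ^ 2 * (n ^ 4 * p))%nat ->
  INR q <= 32 * (Rpower (INR p) (1/3) * Rpower (INR n) (4/3)).
Proof.
move=> p_gt0 q3_le; set R := Rpower _ _ * Rpower _ _.
have R_pos : 0 < R by apply: Rmult_lt_0_compat; apply: Rpower_gt0.
have [n0|n_gt0] := posnP n.
  move: q3_le; rewrite n0 exp0n // mul0n muln0 leqn0 expn_eq0 => /andP[/eqP-> _] /=.
  lra.
have R3 : R ^ 3 = INR p * INR n ^ 4.
  have p_pos : 0 < INR p by apply/lt_0_INR/ltP.
  have n_pos : 0 < INR n by apply/lt_0_INR/ltP.
  rewrite /R Rpow_mult_distr !Rpower_pow3.
  have -> : 1/3 * 3 = 1 by field.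
  have -> : 4/3 * 3 = INR 4 by rewrite INR_IZR_INZ /=; field.
  by rewrite Rpower_1 // Rpower_pow.
have q3_leR : INR q ^ 3 <= 16384 * R ^ 3.
  have INR128 : INR 128 = 128 by rewrite INR_IZR_INZ.
  by move/leP/le_INR: q3_le; rewrite R3 !mult_INR INR128; congr (_ <= _); ring.
apply: Rnot_lt_le => q_gt.
have : (32 * R) ^ 3 <= INR q ^ 3 by apply: pow_incr; lra.
have : 0 < R ^ 3 by apply: pow_lt.
lra.
Qed.

Theorem lemma3p5 :
  exists C0 C : R, 0 < C /\
    forall (V : finType) (P : seq (seq V)),
      path_system P ->
      (0 < size P)%nat ->
      bridge_girth_gt3 P ->
      C0 <= INR (total_length P) / INR (size P) ->
      INR (sq_norm P) <=
        C * (INR #|V| * INR (max_length P)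
             + Rpower (INR (size P)) (1/3) * Rpower (INR #|V|) (4/3)).
Proof.
exists 4, 32; split; first lra.
move=> V P P_uniq p_gt0 P_girth avg_ge.
have S_ge : (4 * size P <= total_length P)%nat.
  have p_pos : 0 < INR (size P) by apply/lt_0_INR/ltP.
  have INR4 : INR 4 = 4 by rewrite INR_IZR_INZ.
  apply/leP/INR_le; rewrite mult_INR INR4.
  move: (Rmult_le_compat_r _ _ _ (Rlt_le _ _ p_pos) avg_ge).
  by rewrite /Rdiv Rmult_assoc Rinv_l ?Rmult_1_r //; lra.
have R_ge0 : 0 <= Rpower (INR (size P)) (1/3) * Rpower (INR #|V|) (4/3).
  by apply: Rmult_le_pos; apply: Rlt_le; apply: Rpower_gt0.
have nL_ge0 : 0 <= INR #|V| * INR (max_length P) by apply: Rmult_le_pos; apply: pos_INR.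
case: (sq_norm_dichotomy P_uniq P_girth p_gt0 S_ge) => [Q_le|Q3_le].
  have INR32 : INR 32 = 32 by rewrite INR_IZR_INZ.
  by move/leP/le_INR: Q_le; rewrite !mult_INR INR32; lra.
by have := cube_root_bound p_gt0 Q3_le; lra.
Qed.
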